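(* There is a randomized algorithm which, given a set $P$ of $n$ elements and access to a query oracle for a poset $(P,\succ)$ of width at most $w$, finds the set of minimal elements of $(P,\succ)$, and whose expected number of oracle queries is at most $$\frac{w+1}{2}\,n+\frac{w^2-w}{2}\,(\log n-\log w).$$
   Context: A poset $(P,\succ)$ consists of a set $P$ and an irreflexive, transitive relation $\succ$. Elements $a,b$ are incomparable if neither $a\succ b$ nor $b\succ a$; the width is the maximum size of a set of mutually incomparable elements. An element $a$ is minimal if there is no $b$ with $a\succ b$. A query oracle answers a query on $(x,y)$ by reporting whether $x\succ y$, $y\succ x$, or they are incomparable. Logarithms are base $2$. *)

From Stdlib Require Import Reals.
From mathcomp Require Import all_boot.

Set Implicit Arguments.
Unset Strict Implicit.
Unset Printing Implicit Defensive.

(* A poset on the ground set P = 'I_n is given by its strict relation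
   r x y  <->  x ≻ y. *)
Definition is_poset n (r : rel 'I_n) : Prop :=
  (forall x, ~~ r x x) /\ (forall x y z, r x y -> r y z -> r x z).

Definition antichain n (r : rel 'I_n) (A : {set 'I_n}) : Prop :=
  forall x y, x \in A -> y \in A -> x != y -> ~~ r x y /\ ~~ r y x.

Definition width_le n (r : rel 'I_n) (w : nat) : Prop :=
  forall A : {set 'I_n}, antichain r A -> #|A| <= w.

Definition minimal_set n (r : rel 'I_n) : {set 'I_n} :=
  [set a | [forall b, ~~ r a b]].

Inductive answer := Succ | Prec | Incomp.

Definition oracle n (r : rel 'I_n) (x y : 'I_n) : answer :=
  if r x y then Succ else if r y x then Prec else Incomp.

(* Randomized query algorithms on ground set 'I_n, as finite decision trees:
   - Ret S     : stop and output the set S;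
   - Query x y k : ask the oracle about (x,y) and continue with k (answer);
   - Rand k f  : draw i uniformly at random from 'I_(k.+1), continue with f i. *)
Inductive alg (n : nat) : Type :=
| Ret : {set 'I_n} -> alg n
| Query : 'I_n -> 'I_n -> (answer -> alg n) -> alg n
| Rand : forall k : nat, ('I_k.+1 -> alg n) -> alg n.

Fixpoint always_outputs n (r : rel 'I_n) (S : {set 'I_n}) (a : alg n) : Prop :=
  match a with
  | Ret T => T = S
  | Query x y k => always_outputs r S (k (oracle r x y))
  | Rand k f => forall i, always_outputs r S (f i)
  end.

Fixpoint expected_queries n (r : rel 'I_n) (a : alg n) : R :=
  match a with
  | Ret _ => R0
  | Query x y k => Rplus R1 (expected_queries r (k (oracle r x y)))
  | Rand k f =>
      Rdiv (foldr (fun i acc => Rplus (expected_queries r (f i)) acc) R0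
              (enum 'I_k.+1))
           (INR k.+1)
  end.

Definition log2 (x : R) : R := Rdiv (ln x) (ln (INR 2)).

(* The algorithm inserts the elements one by one in uniformly random order,
   maintaining the list of minimal elements seen so far.  A new element x is
   compared with the current minimal elements in random order: it is discarded
   as soon as it lies above one of them, the ones above x are dropped, and x
   joins the list once all have been compared.  Inserting x costs at most the
   length a <= min(j - 1, w) of the list, where j is the number of elements
   seen; if x is not minimal among them, some element of the list lies below x
   and the random order meets the first such element after at most (a + 1) / 2
   queries in expectation.  The j-th inserted element is uniform among the
   first j, of which at most w are minimal, so the j-th insertion costs at most
   j - 1 if j <= w and (w + 1) / 2 + (w / j) (w - 1) / 2 otherwise.  Summing
   over j and bounding the tail sum of w / j by w (log n - log w) gives the
   claim. *)

From Pilot Require Import Defs.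
From Stdlib Require Import Reals Lra.
From mathcomp Require Import all_boot.

Set Implicit Arguments.
Unset Strict Implicit.
Unset Printing Implicit Defensive.

Lemma has_rem (A : eqType) (p : pred A) y s : ~~ p y -> has p (rem y s) = has p s.
Proof.
by move=> npy; elim: s => //= z s IH; case: eqP => [->|_] /=; rewrite ?IH ?(negbTE npy).
Qed.

Lemma card_set_uniq (A : finType) (s : seq A) : uniq s -> #|[set:: s]| = size s.
Proof. by rewrite cardsE => /card_uniqP. Qed.

Lemma count_mem_set_le (A : finType) (s : seq A) (X : {set A}) :
  uniq s -> count (mem X) s <= #|X|.
Proof.
move=> us; apply/card_geqP; exists (filter (mem X) s).
by rewrite filter_uniq // size_filter; split=> // y; rewrite mem_filter => /andP[].
Qed.

Section Minimal.

Variables (n : nat) (r : rel 'I_n).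
Implicit Types (S K : {set 'I_n}) (x y z : 'I_n).

Definition mins S : {set 'I_n} := [set a in S | [forall b in S, ~~ r a b]].

Lemma minsP S x : reflect (x \in S /\ forall y, y \in S -> ~~ r x y) (x \in mins S).
Proof. by rewrite inE; apply: (iffP andP) => -[xS /forall_inP]. Qed.

Lemma mins_subset S : mins S \subset S.
Proof. by apply/subsetP => x /minsP[]. Qed.

Lemma mins0 : mins set0 = set0.
Proof. by apply/setP => x; rewrite !inE. Qed.

Lemma minimal_setE : minimal_set r = mins setT.
Proof. by apply/setP => x; rewrite !inE; apply/forallP/forall_inP => H y //; apply: H. Qed.

Lemma card_mins_le w S : width_le r w -> #|mins S| <= w.
Proof.
move=> wr; apply: wr => x y /minsP[xS xm] /minsP[yS ym] _.
by split; [apply: xm | apply: ym].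
Qed.

Hypothesis poset : is_poset r.

Lemma exists_mins_above S z : z \in S -> exists2 m, m \in mins S & m = z \/ r z m.
Proof.
have [irr tr] := poset; move=> zS.
pose above m := [set y in S | r m y].
pose P := [pred m | (m \in S) && ((m == z) || r z m)].
have zP : P z by rewrite /= zS eqxx.
case: (@arg_minnP _ _ P (fun m => #|above m|) zP) => m /andP[mS zm] mmin.
exists m; last by case/predU1P: zm; [left | right].
apply/minsP; split => // b bS; apply/negP => mb.
have : #|above b| < #|above m|.
  apply/proper_card/properP; split.
    by apply/subsetP => y; rewrite !inE => /andP[-> /(tr _ _ _ mb)].
  by exists b; rewrite !inE ?bS ?mb // (negbTE (irr b)) andbF.
rewrite ltnNge mmin //= bS.
by case/predU1P: zm => [<-|/tr ->]; rewrite ?mb ?orbT.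
Qed.

Lemma mins_setU1_above S x y : y \in mins S -> r x y -> mins (x |: S) = mins S.
Proof.
have [irr tr] := poset; move=> /minsP[yS ymin] xy.
apply/setP => z; apply/minsP/minsP => [[zxS zmin]|[zS zmin]].
  split => [|b bS]; last by apply: zmin; rewrite in_setU1 bS orbT.
  case/setU1P: zxS => [zx|//].
  by move: (zmin y); rewrite in_setU1 yS orbT zx xy => /(_ isT).
split => [|b]; first by rewrite in_setU1 zS orbT.
case/setU1P => [->|]; last exact: zmin.
by apply/negP => /tr/(_ xy) zy; move: (zmin y yS); rewrite zy.
Qed.

Lemma mins_setU1_incomparable S K x :
  K \subset mins S -> {in K, forall y, ~~ r x y /\ ~~ r y x} ->
  {in mins S :\: K, forall y, r y x} -> mins (x |: S) = x |: K.
Proof.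
have [irr tr] := poset; move=> KS Kinc belowx.
have xmin b : b \in S -> ~~ r x b.
  move=> bS; apply/negP => xb.
  have [m mmin bm] := exists_mins_above bS.
  have xm : r x m by case: bm => [->|/(tr _ _ _ xb)].
  case mK: (m \in K); first by case: (Kinc m mK); rewrite xm.
  by move: (irr x); rewrite (tr _ _ _ xm (belowx m _)) // in_setD mK.
apply/setP => z; case/boolP: (z == x) => [/eqP->|zx].
  rewrite setU11; apply/minsP; split; first exact: setU11.
  by move=> b /setU1P[->|]; [exact: irr | exact: xmin].
rewrite in_setU1 (negbTE zx) /=; apply/minsP/idP => [[zxS zmin]|zK].
  have zmS : z \in mins S.
    apply/minsP; split => [|b bS]; last by apply: zmin; rewrite in_setU1 bS orbT.
    by move: zxS; rewrite in_setU1 (negbTE zx).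
  apply: contraT => zK; move: (zmin x (setU11 _ _)).
  by rewrite belowx // in_setD zK zmS.
have /minsP[zS zmin] := subsetP KS z zK.
split => [|b /setU1P[->|]]; [by rewrite in_setU1 zS orbT | by case: (Kinc z zK) | exact: zmin].
Qed.

End Minimal.

Local Open Scope R_scope.

Definition sumR {A} (l : seq A) (F : A -> R) : R :=
  foldr (fun y acc => F y + acc) 0 l.

Definition mean {A} (l : seq A) (F : A -> R) : R := sumR l F / INR (size l).

Section Mean.

Variable A : eqType.
Implicit Types (l : seq A) (F G : A -> R) (p : pred A).

Lemma sumR_le l F G : {in l, forall y, F y <= G y} -> sumR l F <= sumR l G.
Proof.
elim: l => [|a l IH] FG /=; first lra.
apply: Rplus_le_compat; first by apply: FG; rewrite inE eqxx.
by apply: IH => y yl; apply: FG; rewrite inE yl orbT.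
Qed.

Lemma sumR_if l p a b :
  sumR l (fun y => if p y then a else b) =
  INR (count p l) * a + (INR (size l) - INR (count p l)) * b.
Proof.
elim: l => [|y l IH]; first by rewrite /= Rmult_0_l Rminus_0_r Rmult_0_l Rplus_0_r.
rewrite [sumR _ _]/= IH (_ : count p (y :: l) = p y + count p l)%N //.
rewrite (_ : size (y :: l) = (size l).+1) // S_INR.
by case: (p y); rewrite ?add1n ?add0n ?S_INR; lra.
Qed.

Lemma mean_le l F G : {in l, forall y, F y <= G y} -> mean l F <= mean l G.
Proof.
case: l => [|a l] FG; first by rewrite /mean /=; lra.
apply: Rmult_le_compat_r; last exact: sumR_le.
by apply/Rlt_le/Rinv_0_lt_compat/lt_0_INR/ltP.
Qed.

Lemma mean_if l p a b : l != [::] ->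
  mean l (fun y => if p y then a else b) =
  b + INR (count p l) / INR (size l) * (a - b).
Proof.
case: l => [//|y l] _; rewrite /mean sumR_if.
have : 0 < INR (size (y :: l)) by apply/lt_0_INR/ltP.
by move=> pos; field; lra.
Qed.

Lemma mean_const l c : l != [::] -> mean l (fun _ => c) = c.
Proof.
by move=> l0; rewrite (mean_if pred0 c c l0) Rminus_diag Rmult_0_r Rplus_0_r.
Qed.

Lemma mean_if_has_le l p c : has p l ->
  mean l (fun y => if p y then c else c + INR (size l) / 2) <= c + (INR (size l) - 1) / 2.
Proof.
move=> hp; have l0 : l != [::] by case: (l) hp.
have s_gt0 : 0 < INR (size l) by apply/lt_0_INR/ltP; case: (l) hp.
have : 1 <= INR (count p l) by apply/(le_INR 1)/leP; rewrite -has_count.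
rewrite mean_if //; set cnt := INR (count p l) => cnt_ge1.
have -> : cnt / INR (size l) * (c - (c + INR (size l) / 2)) = - cnt / 2 by field; lra.
lra.
Qed.

Lemma mean_if_count_le l p b d (w : nat) : l != [::] -> 0 <= d -> (count p l <= w)%N ->
  mean l (fun y => if p y then b + d else b) <= b + INR w / INR (size l) * d.
Proof.
move=> l0 d_ge0 cnt_w; rewrite mean_if // (_ : b + d - b = d); last by ring.
apply/Rplus_le_compat_l/Rmult_le_compat_r => //.
apply: Rmult_le_compat_r; last exact/le_INR/leP.
by apply/Rlt_le/Rinv_0_lt_compat/lt_0_INR/ltP; case: (l) l0.
Qed.

End Mean.

Lemma ln_le_sub1 y : 0 < y -> ln y <= y - 1.
Proof. by move=> y_gt0; have := exp_ineq1_le (ln y); rewrite exp_ln //; lra. Qed.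

Lemma inv_succ_le_ln_succ x : 0 < x -> 1 / (x + 1) <= ln (x + 1) - ln x.
Proof.
move=> x_gt0; have frac_gt0 : 0 < x / (x + 1) by apply: Rdiv_lt_0_compat; lra.
have -> : ln x = ln (x + 1) + ln (x / (x + 1)).
  by rewrite -ln_mult; [congr ln; field | | ]; lra.
have := ln_le_sub1 frac_gt0.
have -> : x / (x + 1) - 1 = - (1 / (x + 1)) by field; lra.
lra.
Qed.

Lemma inv_succ_le_log2_succ x : 0 < x -> 1 / (x + 1) <= log2 (x + 1) - log2 x.
Proof.
move=> x_gt0; have d_ge := inv_succ_le_ln_succ x_gt0.
have [L_gt0 L_le1] : 0 < ln (INR 2) <= 1.
  rewrite (_ : INR 2 = 2); last by rewrite /=; lra.
  by split; [have := ln_lt_2 | have := ln_le_sub1 Rlt_0_2]; lra.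
have d_ge0 : 0 <= ln (x + 1) - ln x.
  by apply: Rle_trans d_ge; apply/Rlt_le/Rdiv_lt_0_compat; lra.
rewrite /log2 (_ : _ - _ =
  (ln (x + 1) - ln x) + (ln (x + 1) - ln x) * (1 - ln (INR 2)) / ln (INR 2)).
  apply: Rle_trans d_ge _; rewrite -{1}[_ - ln x]Rplus_0_r.
  by apply/Rplus_le_compat_l/Rmult_le_pos; [nra | exact/Rlt_le/Rinv_0_lt_compat].
by field; lra.
Qed.

(* [insertion_cost w m b] bounds the expected cost of inserting an element
   after [m] others, [b] telling whether it is minimal: it is compared with at
   most [minn m w] elements.  [insertion_bound w j] bounds the average of this
   cost over the [j] possible last elements, at most [w] of them minimal. *)
Definition insertion_cost (w m : nat) (minimal : bool) : R :=
  if (m < w)%N then INR m else if minimal then INR w else (INR w + 1) / 2.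

Definition insertion_bound (w j : nat) : R :=
  if (j <= w)%N then INR j - 1
  else (INR w + 1) / 2 + INR w / INR j * ((INR w - 1) / 2).

Fixpoint search_bound (w j : nat) : R :=
  if j is j'.+1 then search_bound w j' + insertion_bound w j else 0.

Lemma mean_insertion_cost_le (A : eqType) (l : seq A) (p : pred A) w C :
  l != [::] -> (1 <= w)%N -> (count p l <= w)%N ->
  mean l (fun y => C + insertion_cost w (size l).-1 (p y)) <= C + insertion_bound w (size l).
Proof.
case: l => [//|y l] _ w_ge1 cnt_w; rewrite /insertion_cost /insertion_bound.
rewrite (_ : size (y :: l) = (size l).+1) // succnK S_INR.
have [l_w | w_l] := ltnP (size l) w.
  by rewrite mean_const //; lra.
have w_ge1' : 1 <= INR w by apply/(le_INR 1)/leP.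
pose b := C + (INR w + 1) / 2.
apply: Rle_trans (mean_le (G := fun y => if p y then b + (INR w - 1) / 2 else b) _) _.
  by move=> z _; rewrite /b; case: (p z); lra.
apply: Rle_trans (mean_if_count_le b _ _ cnt_w) _ => //; first lra.
by rewrite /b (_ : INR (size (y :: l)) = INR (size l) + 1); [lra | exact: S_INR].
Qed.

Lemma search_bound_small w j : (j <= w)%N -> search_bound w j = INR j * (INR j - 1) / 2.
Proof.
elim: j => [|j IH] j_w; first by rewrite /=; field.
change (search_bound w j.+1) with (search_bound w j + insertion_bound w j.+1).
by rewrite IH ?(ltnW j_w) // /insertion_bound j_w S_INR; field.
Qed.

Lemma search_bound_large w k : (1 <= w)%N ->
  search_bound w (w + k) <= (INR w + 1) / 2 * INR (w + k) - INR w
    + (INR w ^ 2 - INR w) / 2 * (log2 (INR (w + k)) - log2 (INR w)).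
Proof.
move=> w_ge1; have w_ge1' : 1 <= INR w by apply/(le_INR 1)/leP.
elim: k => [|k IH].
  by rewrite addn0 search_bound_small // Rminus_diag; right; field.
rewrite addnS.
change (search_bound w (w + k).+1)
  with (search_bound w (w + k) + insertion_bound w (w + k).+1).
rewrite /insertion_bound ifN; last by rewrite -ltnNge ltnS leq_addr.
rewrite S_INR.
have j_gt0 : 0 < INR (w + k) by apply/lt_0_INR/ltP; rewrite addn_gt0 w_ge1.
have := Rmult_le_compat_l ((INR w ^ 2 - INR w) / 2) _ _ _ (inv_succ_le_log2_succ j_gt0).
have -> : (INR w ^ 2 - INR w) / 2 * (1 / (INR (w + k) + 1))
  = INR w / (INR (w + k) + 1) * ((INR w - 1) / 2) by field; lra.
move/(_ ltac:(nra)); lra.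
Qed.

Lemma search_bound_le w j : (1 <= w <= j)%N ->
  search_bound w j <= (INR w + 1) / 2 * INR j
    + (INR w ^ 2 - INR w) / 2 * (log2 (INR j) - log2 (INR w)).
Proof.
case/andP => w_ge1 w_j; have := search_bound_large (j - w) w_ge1.
by rewrite subnKC //; have := pos_INR w; lra.
Qed.

Definition rand_elem {n} {A : Type} (s : A) (l : seq A) (f : A -> alg n) : alg n :=
  Rand (fun i : 'I_(size l).+1 => f (nth s (s :: l) i)).

Lemma expected_rand_elem n (r : rel 'I_n) (A : eqType) (s : A) l f :
  expected_queries r (rand_elem s l f) = mean (s :: l) (fun y => expected_queries r (f y)).
Proof.
rewrite /= /mean /sumR; congr (_ / _).
have sl : s :: l = map (nth s (s :: l) \o val) (enum 'I_(size l).+1).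
  by rewrite map_comp val_enum_ord map_nth_iota0 // take_oversize.
by rewrite [in RHS]sl foldr_map.
Qed.

Lemma always_outputs_rand_elem n (r : rel 'I_n) S (A : eqType) (s : A) l f :
  {in s :: l, forall y, always_outputs r S (f y)} -> always_outputs r S (rand_elem s l f).
Proof. by move=> H i; apply/H/mem_nth. Qed.

(* Since [alg] has no bind, the algorithms are written in continuation-passing
   style: a continuation [k] receives the list of minimal elements computed so
   far.  [cont_spec r T S B k] says that [k] is correct and costs at most [B]
   whenever it receives the minimal elements of [S]. *)
Definition cont_spec {n} (r : rel 'I_n) (T S : {set 'I_n}) (B : R)
    (k : seq 'I_n -> alg n) : Prop :=
  forall N, uniq N -> [set:: N] = mins r S ->
    always_outputs r T (k N) /\ expected_queries r (k N) <= B.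

Lemma cont_spec_le n (r : rel 'I_n) T S B B' k :
  B <= B' -> cont_spec r T S B k -> cont_spec r T S B' k.
Proof. by move=> BB' kS N Nu NS; have [? ?] := kS N Nu NS; split => //; lra. Qed.

(* Inserting [x] into the list [M0] of minimal elements: [M] holds the elements
   of [M0] not yet compared with [x], [keep] those found incomparable to [x].
   ([Prec] is qualified because [BinPos] also exports a notation [Prec].) *)
Definition insert_query {n} (rec : seq 'I_n -> seq 'I_n -> alg n) (x : 'I_n)
    (M M0 keep : seq 'I_n) (k : seq 'I_n -> alg n) (y : 'I_n) : alg n :=
  Query x y (fun a =>
    match a with
    | Succ => k M0
    | Defs.Prec => rec (rem y M) keep
    | Incomp => rec (rem y M) (y :: keep)
    end).

Fixpoint insert {n} (fuel : nat) (x : 'I_n) (M M0 keep : seq 'I_n)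
    (k : seq 'I_n -> alg n) : alg n :=
  if fuel is fuel'.+1 then
    if M is y0 :: M' then
      rand_elem y0 M' (insert_query (fun M1 keep1 => insert fuel' x M1 M0 keep1 k) x M M0 keep k)
    else k (x :: keep)
  else k (x :: keep).

Section Insertion.

Variables (n : nat) (r : rel 'I_n) (T S : {set 'I_n}) (x : 'I_n) (M0 : seq 'I_n).
Variables (B : R) (k : seq 'I_n -> alg n).
Hypotheses (poset : is_poset r) (xS : x \notin S) (M0_uniq : uniq M0).
Hypotheses (M0_mins : [set:: M0] = mins r S) (k_spec : cont_spec r T (x |: S) B k).

Let in_M0 y : (y \in M0) = (y \in mins r S).
Proof. by rewrite -M0_mins in_set. Qed.

Definition insert_inv (M keep : seq 'I_n) : Prop :=
  [/\ uniq (M ++ keep), {subset M ++ keep <= M0},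
      {in keep, forall y, ~~ r x y /\ ~~ r y x} &
      {in M0, forall y, y \in M ++ keep \/ r y x}].

Definition insert_bounds (M : seq 'I_n) (a : alg n) : Prop :=
  [/\ always_outputs r T a, expected_queries r a <= INR (size M) + B &
      has (r x) M -> expected_queries r a <= (INR (size M) + 1) / 2 + B].

Lemma insert_inv_init : insert_inv M0 [::].
Proof. by split; rewrite ?cats0 // => y ->; left. Qed.

Lemma insert_inv_prec M keep y :
  insert_inv M keep -> y \in M -> r y x -> insert_inv (rem y M) keep.
Proof.
move=> [u sub inc cov] yM yx.
have perm : perm_eq (M ++ keep) (y :: rem y M ++ keep).
  by rewrite -cat_cons perm_cat2r perm_to_rem.
split => //.
- by move: u; rewrite (perm_uniq perm) => /andP[].
- by move=> z z_in; apply: sub; rewrite (perm_mem perm) inE z_in orbT.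
- move=> z /cov[|]; last by right.
  by rewrite (perm_mem perm) inE => /predU1P[->|]; [right | left].
Qed.

Lemma insert_inv_incomp M keep y : insert_inv M keep -> y \in M ->
  ~~ r x y -> ~~ r y x -> insert_inv (rem y M) (y :: keep).
Proof.
move=> [u sub inc cov] yM xy yx.
have perm : perm_eq (M ++ keep) (rem y M ++ y :: keep).
  rewrite perm_sym -cat1s perm_catCA cat1s perm_sym -cat_cons perm_cat2r.
  exact: perm_to_rem.
split.
- by rewrite -(perm_uniq perm).
- by move=> z; rewrite -(perm_mem perm); apply: sub.
- by move=> z /predU1P[->|/inc].
- by move=> z /cov[|]; [rewrite (perm_mem perm); left | right].
Qed.

Lemma insert_inv_done keep : insert_inv [::] keep ->
  always_outputs r T (k (x :: keep)) /\ expected_queries r (k (x :: keep)) <= B.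
Proof.
move=> [u sub inc cov]; apply: k_spec.
  by rewrite /= u andbT; apply: contra xS => /sub; rewrite in_M0 => /minsP[].
rewrite set_cons; symmetry; apply: (mins_setU1_incomparable poset).
- by apply/subsetP => y; rewrite in_set -in_M0 => /sub.
- by move=> y; rewrite in_set; apply: inc.
- move=> y; rewrite in_setD in_set -in_M0 => /andP[y_keep /cov[]] //.
  by rewrite (negbTE y_keep).
Qed.

Lemma insert_succ y : y \in M0 -> r x y ->
  always_outputs r T (k M0) /\ expected_queries r (k M0) <= B.
Proof.
move=> yM0 xy; apply: k_spec => //; rewrite M0_mins.
by rewrite (mins_setU1_above poset (y := y)) // -in_M0.
Qed.

Lemma insert_query_spec rec M keep (y : 'I_n) : insert_inv M keep -> y \in M ->
  (forall keep', insert_inv (rem y M) keep' -> insert_bounds (rem y M) (rec (rem y M) keep')) ->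
  [/\ always_outputs r T (insert_query rec x M M0 keep k y),
      expected_queries r (insert_query rec x M M0 keep k y) <= INR (size M) + B &
      has (r x) M -> expected_queries r (insert_query rec x M M0 keep k y) <=
        if r x y then 1 + B else 1 + B + INR (size M) / 2].
Proof.
move=> inv yM; rewrite /insert_bounds (size_rem yM) /= => rec_spec.
have size_M : INR (size M) = INR (size M).-1 + 1.
  by rewrite -S_INR prednK //; case: (M) yM.
have m_ge0 : 0 <= INR (size M).-1 := pos_INR _.
rewrite size_M /insert_query /= /oracle.
case xy: (r x y); [|case yx: (r y x)] => /=.
- have yM0 : y \in M0 by case: inv => _ sub _ _; apply: sub; rewrite mem_cat yM.
  by have [? ?] := insert_succ yM0 xy; split => //; lra.
- have [? ? hit] := rec_spec keep (insert_inv_prec inv yM yx).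
  split => //; first lra.
  by rewrite -(has_rem _ (negbT xy)) => /hit; lra.
- have [? ? hit] := rec_spec (y :: keep) (insert_inv_incomp inv yM (negbT xy) (negbT yx)).
  split => //; first lra.
  by rewrite -(has_rem _ (negbT xy)) => /hit; lra.
Qed.

Lemma insert_spec fuel M keep :
  (size M <= fuel)%N -> insert_inv M keep -> insert_bounds M (insert fuel x M M0 keep k).
Proof.
elim: fuel M keep => [|fuel IH] [|y0 M'] keep // sizeM inv;
  try by have [? ?] := insert_inv_done inv; split; rewrite //= Rplus_0_l.
set M := y0 :: M'; set rec := fun M1 keep1 => insert fuel x M1 M0 keep1 k.
have -> : insert fuel.+1 x M M0 keep k = rand_elem y0 M' (insert_query rec x M M0 keep k) by [].
have rec_spec y : y \in M -> forall keep',
    insert_inv (rem y M) keep' -> insert_bounds (rem y M) (rec (rem y M) keep').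
  by move=> yM keep'; apply: IH; rewrite size_rem.
have branch y (yM : y \in M) := insert_query_spec inv yM (rec_spec y yM).
split.
- by apply: always_outputs_rand_elem => y /branch[].
- rewrite expected_rand_elem; apply: Rle_trans (mean_le (G := fun _ => INR (size M) + B) _) _.
    by move=> y /branch[].
  by rewrite mean_const //; lra.
move=> hit; rewrite expected_rand_elem.
apply: Rle_trans (mean_le (G := fun y => if r x y then 1 + B else 1 + B + INR (size M) / 2) _) _.
  by move=> y /branch[_ _]; apply.
by apply: Rle_trans (mean_if_has_le _ hit) _; rewrite /=; lra.
Qed.

End Insertion.

Definition insert_cont {n} (x : 'I_n) (k : seq 'I_n -> alg n) (M : seq 'I_n) : alg n :=
  insert (size M) x M M [::] k.

Lemma insert_cont_spec n (r : rel 'I_n) T S x B k : is_poset r -> uniq S -> x \in S ->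
  cont_spec r T [set:: S] B k ->
  let a := INR #|mins r [set:: rem x S]| in
  cont_spec r T [set:: rem x S] (B + a) (insert_cont x k) /\
  (x \notin mins r [set:: S] ->
   cont_spec r T [set:: rem x S] (B + (a + 1) / 2) (insert_cont x k)).
Proof.
move=> poset uS xS kS a; have [irr tr] := poset.
have xS' : x \notin [set:: rem x S] by rewrite in_set mem_rem_uniqF.
have S_eq : x |: [set:: rem x S] = [set:: S].
  by rewrite -set_cons; apply/setP => z; rewrite !in_set (perm_mem (perm_to_rem xS)).
have spec N : uniq N -> [set:: N] = mins r [set:: rem x S] ->
    insert_bounds r T x B N (insert_cont x k N).
  move=> uN NS; apply: (insert_spec poset xS' uN NS) => //; last exact: insert_inv_init.
  by rewrite S_eq.
split=> [N uN NS | xnm N uN NS]; have [? E_le hit] := spec N uN NS;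
  have size_N : INR (size N) = a by rewrite /a -NS card_set_uniq.
  by rewrite size_N in E_le; split=> //; lra.
have : has (r x) N.
  move: xnm; rewrite inE in_set xS /= negb_forall_in => /existsP[b /andP[bS /negPn xb]].
  have bS' : b \in [set:: rem x S].
    rewrite in_set (perm_mem (perm_to_rem xS)) in bS; rewrite in_set.
    by case/predU1P: bS => // bx; move: xb (irr x); rewrite bx => ->.
  have [m mmin bm] := exists_mins_above poset bS'.
  apply/hasP; exists m; first by move: mmin; rewrite -NS in_set.
  by case: bm => [->|/(tr _ _ _ xb)].
by move/hit; rewrite size_N; split=> //; lra.
Qed.

Lemma insert_cont_cost n (r : rel 'I_n) T w S x B k :
  is_poset r -> width_le r w -> uniq S -> x \in S -> cont_spec r T [set:: S] B k ->
  cont_spec r T [set:: rem x S]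
    (B + insertion_cost w (size S).-1 (x \in mins r [set:: S])) (insert_cont x k).
Proof.
move=> poset width uS xS kS; have [kS1 kS2] := insert_cont_spec poset uS xS kS.
have card_rem : (#|mins r [set:: rem x S]| <= minn (size S).-1 w)%N.
  rewrite leq_min (card_mins_le _ width) andbT -(size_rem xS) -card_set_uniq ?rem_uniq //.
  exact/subset_leq_card/mins_subset.
move: card_rem; rewrite /insertion_cost; case: ltnP => _.
  by move=> /leP/le_INR card_m; apply: cont_spec_le kS1; lra.
move=> /leP/le_INR card_w.
case: ifPn => xm; first by apply: cont_spec_le kS1; lra.
by apply: cont_spec_le (kS2 xm); lra.
Qed.

(* [fuel] only ensures termination; it is always at least the length of [S].
   The element [x] drawn first is the last one inserted. *)
Fixpoint min_search {n} (fuel : nat) (S : seq 'I_n) (k : seq 'I_n -> alg n) : alg n :=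
  if fuel is fuel'.+1 then
    if S is s :: S' then
      rand_elem s S' (fun x => min_search fuel' (rem x S) (insert_cont x k))
    else k [::]
  else k [::].

Lemma min_search_spec n (r : rel 'I_n) T w fuel S k B :
  is_poset r -> width_le r w -> (1 <= w)%N ->
  (size S <= fuel)%N -> uniq S -> cont_spec r T [set:: S] B k ->
  always_outputs r T (min_search fuel S k) /\
  expected_queries r (min_search fuel S k) <= search_bound w (size S) + B.
Proof.
move=> poset width w_ge1.
have nil_mins : [set:: [::]] = mins r [set:: ([::] : seq 'I_n)] by rewrite set_nil mins0.
elim: fuel S k B => [|fuel IH] [|s S'] k B // sizeS uS kS;
  try by have [] := kS [::] isT nil_mins; split; rewrite //= Rplus_0_l.
set S := s :: S'; pose p := [pred x | x \in mins r [set:: S]].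
have search_rem x : x \in S ->
    always_outputs r T (min_search fuel (rem x S) (insert_cont x k)) /\
    expected_queries r (min_search fuel (rem x S) (insert_cont x k))
      <= search_bound w (size S') + (B + insertion_cost w (size S') (p x)).
  move=> xS; rewrite -[size S']/(size S).-1 -(size_rem xS).
  by apply: IH; rewrite ?size_rem ?rem_uniq //; apply: insert_cont_cost.
split; first by apply: always_outputs_rand_elem => x /search_rem[].
rewrite expected_rand_elem.
apply: Rle_trans (mean_le (G := fun x =>
  (search_bound w (size S') + B) + insertion_cost w (size S).-1 (p x)) _) _.
  by move=> x /search_rem[_ le_x]; rewrite Rplus_assoc; exact: le_x.
apply: Rle_trans (mean_insertion_cost_le _ _ w_ge1 _) _ => //.
  exact/(leq_trans (count_mem_set_le _ uS))/card_mins_le.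
by right; rewrite /=; ring.
Qed.

Theorem theorem8 :
  forall n : nat, exists A : alg n,
    forall (w : nat) (r : rel 'I_n),
      (1 <= w <= n)%N -> is_poset r -> width_le r w ->
      always_outputs r (minimal_set r) A /\
      expected_queries r A <=
         (INR w + 1) / 2 * INR n
         + (INR w ^ 2 - INR w) / 2 * (log2 (INR n) - log2 (INR w)).
Proof.
move=> n; exists (min_search n (enum 'I_n) (fun M => Ret [set:: M])).
move=> w r w_bounds poset width; have /andP[w_ge1 _] := w_bounds.
have all_mins : cont_spec r (minimal_set r) [set:: enum 'I_n] 0 (fun M => Ret [set:: M]).
  move=> N _ NS; split; last exact: Rle_refl.
  by rewrite /= NS minimal_setE; congr (mins r _); apply/setP => z; rewrite in_set mem_enum in_setT.
have [outputs queries] := min_search_spec poset width w_ge1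
  (eq_leq (size_enum_ord n)) (enum_uniq _) all_mins.
split=> //; apply: Rle_trans queries _.
by rewrite Rplus_0_r size_enum_ord; apply: search_bound_le.
Qed.
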